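(* Consider the following slotted system. There are $N\ge 2$ users and slots $t=1,\dots,T$. In every slot, independently, the BS schedules one user chosen uniformly at random among the $N$ users. An adversary uses a blocking matrix $\sigma\in\{0,1\}^{N\times T}$, where $\sigma_i(t)=0$ means user $i$'s channel is blocked in slot $t$. Feasibility means $\sum_{i,t}(1-\sigma_i(t))\le\alpha T$ and at most one user is blocked per slot, where $0<\alpha<1$ and $\alpha T\in\mathbb{Z}$. The ages satisfy $a_i(1)=1$ and $a_i(t+1)=1$ if user $i$ is scheduled in slot $t$ and $\sigma_i(t)=1$, and $a_i(t+1)=a_i(t)+1$ otherwise. The average age is $\Delta^{\sigma}=\frac{1}{T}\sum_{t=1}^T\frac1N\sum_{i=1}^N\mathbb{E}[a_i(t)]$. Then for every feasible $\sigma$, $\Delta^{\sigma}\le \frac{T+1}{2N}+(N-1)$.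
   Context: The expectation is over the random scheduling. *)

From HB Require Import structures.
From mathcomp Require Import all_boot all_order all_algebra.
Set Implicit Arguments. Unset Strict Implicit. Unset Printing Implicit Defensive.
Import Order.TTheory GRing.Theory Num.Theory.

(* Slots are 0-indexed: slot t (paper) corresponds to k : 'I_T with k = t-1.
   A schedule is s : {ffun 'I_T -> 'I_N} (user scheduled in each slot);
   the blocking matrix is sigma : 'I_N -> 'I_T -> bool (false = blocked).
   age s sigma i t = a_i(t+1) in the paper's 1-indexed notation. *)
Fixpoint age (N T : nat) (s : {ffun 'I_T -> 'I_N}) (sigma : 'I_N -> 'I_T -> bool)
    (i : 'I_N) (t : nat) : nat :=
  match t with
  | 0 => 1
  | t'.+1 =>
      if insub t' is Some k then
        (if (s k == i) && sigma i k then 1 else (age s sigma i t').+1)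
      else (age s sigma i t').+1
  end.

Local Open Scope ring_scope.

(* Expectation over the uniformly random schedule (each slot independent,
   uniform over N users): average over all N^T schedules. *)
Definition exp_age (R : realFieldType) (N T : nat) (sigma : 'I_N -> 'I_T -> bool)
    (i : 'I_N) (t : nat) : R :=
  (\sum_(s : {ffun 'I_T -> 'I_N}) ((age s sigma i t)%:R : R))
    / (#|{ffun 'I_T -> 'I_N}|)%:R.

Definition avg_age (R : realFieldType) (N T : nat) (sigma : 'I_N -> 'I_T -> bool) : R :=
  (T%:R)^-1 * \sum_(t < T) ((N%:R)^-1 * \sum_(i < N) exp_age R sigma i t).

Definition feasible (R : realFieldType) (N T : nat) (alpha : R)
    (sigma : 'I_N -> 'I_T -> bool) : Prop :=
  ((\sum_(i < N) \sum_(t < T) (1 - (sigma i t : nat)))%N%:R <= alpha * T%:R)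
  /\ (forall t : 'I_T, (#|[set i : 'I_N | ~~ sigma i t]| <= 1)%N).

(* Ages up to slot t only depend on the users scheduled before t, which are
   independent of the user scheduled in slot t.  Hence an unblocked user's
   expected age evolves as E' = 1 + (1 - 1/N) E and a blocked user's as
   E' = 1 + E.  Summing over users, and using that at most one user is blocked
   per slot and that an age never exceeds t + 1, the total expected age at
   slot t is at most (t + 1) + N (N - 1); averaging over t < T gives the
   bound. *)

From HB Require Import structures.
From mathcomp Require Import all_boot all_order all_algebra.
From mathcomp Require Import perm.
From mathcomp Require Import lra ring.
Set Implicit Arguments. Unset Strict Implicit. Unset Printing Implicit Defensive.
Import Order.TTheory GRing.Theory Num.Theory.
Local Open Scope ring_scope.

Section FfunCoordinate.
Variables (aT rT : finType) (V : zmodType) (k : aT).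
Local Notation F := {ffun aT -> rT}.
Variable f : F -> V.
Hypothesis f_indep_k : forall s s' : F, (forall u, u != k -> s u = s' u) -> f s = f s'.

Lemma sum_ffun_coord_eq (x y : rT) :
  \sum_(s : F | s k == x) f s = \sum_(s : F | s k == y) f s.
Proof.
pose swap (s : F) : F :=
  [ffun u => if u == k then tperm x y (s u) else s u].
have swapK : involutive swap.
  by move=> s; apply/ffunP => u; rewrite !ffunE; case: eqP => // _; rewrite tpermK.
rewrite (reindex_inj (inv_inj swapK)); apply: eq_big => s.
  by rewrite ffunE eqxx -[X in _ == X](tpermR x y) (inj_eq perm_inj).
by move=> _; apply: f_indep_k => u /negbTE uk; rewrite ffunE uk.
Qed.

Lemma sum_ffun_coord (x : rT) :
  \sum_(s : F) f s = (\sum_(s : F | s k == x) f s) *+ #|rT|.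
Proof.
rewrite (partition_big (fun s : F => s k) predT) //=.
by under eq_bigr do rewrite (sum_ffun_coord_eq _ x); rewrite sumr_const.
Qed.

End FfunCoordinate.

Lemma sum_ffun_coord_neq (aT rT : finType) (R : numFieldType) (k : aT) (x : rT)
    (f : {ffun aT -> rT} -> R) :
  (forall s s' : {ffun aT -> rT}, (forall u, u != k -> s u = s' u) -> f s = f s') ->
  \sum_(s : {ffun aT -> rT} | s k != x) f s = (1 - #|rT|%:R^-1) * \sum_s f s.
Proof.
move=> f_indep_k.
have rT0 : (#|rT|%:R : R) != 0 by rewrite pnatr_eq0 -lt0n; apply/card_gt0P; exists x.
have -> : \sum_(s : {ffun aT -> rT} | s k != x) f s
          = \sum_s f s - \sum_(s : {ffun aT -> rT} | s k == x) f s.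
  by rewrite [X in _ = X - _](bigID (fun s : {ffun aT -> rT} => s k == x)) /= addrC addrK.
by rewrite (sum_ffun_coord f_indep_k x) -mulr_natr; field.
Qed.

Section ExpectedAge.
Variables (N T : nat) (sigma : 'I_N -> 'I_T -> bool).
Local Notation schedule := {ffun 'I_T -> 'I_N}.

Lemma age_prefix (s s' : schedule) i t :
  (forall u : 'I_T, (u < t)%N -> s u = s' u) -> age s sigma i t = age s' sigma i t.
Proof.
elim: t => //= t IH ss'.
rewrite IH => [|u ut]; last exact/ss'/ltnW.
by case: insubP => [k _ kt|//]; rewrite ss' // kt.
Qed.

Lemma age_le (s : schedule) i t : (age s sigma i t <= t.+1)%N.
Proof. by elim: t => //= t IH; case: insubP => [k _ _|_] //; case: ifP. Qed.

Lemma age_succ (s : schedule) i (k : 'I_T) :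
  age s sigma i k.+1 = if (s k == i) && sigma i k then 1%N else (age s sigma i k).+1.
Proof. by rewrite /= valK. Qed.

Variable R : realFieldType.
Local Notation E := (exp_age R sigma).

Lemma card_schedule_gt0 (i : 'I_N) : 0 < #|schedule|%:R :> R.
Proof. by rewrite ltr0n; apply/card_gt0P; exists [ffun=> i]. Qed.

Lemma exp_age0 i : E i 0 = 1.
Proof.
by rewrite /exp_age sumr_const -mulr_natl mulr1 divff // lt0r_neq0 // (card_schedule_gt0 i).
Qed.

Lemma exp_age_le i t : E i t <= t.+1%:R.
Proof.
rewrite /exp_age ler_pdivrMr ?(card_schedule_gt0 i) // mulr_natr -sumr_const.
by rewrite ler_sum // => s _; rewrite ler_nat age_le.
Qed.

Lemma exp_age_succ i (k : 'I_T) :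
  E i k.+1 = 1 + (if sigma i k then 1 - N%:R^-1 else 1) * E i k.
Proof.
pose a (s : schedule) : R := (age s sigma i k)%:R.
have a_indep_k (s s' : schedule) : (forall u, u != k -> s u = s' u) -> a s = a s'.
  move=> ss'; rewrite /a (age_prefix (s' := s')) // => u uk.
  by apply: ss'; rewrite neq_ltn uk.
have age_succ_sum : \sum_s ((age s sigma i k.+1)%:R : R)
    = #|schedule|%:R + (if sigma i k then 1 - N%:R^-1 else 1) * \sum_s a s.
  have age_succ_split s : ((age s sigma i k.+1)%:R : R)
      = 1 + (if (s k != i) || ~~ sigma i k then a s else 0).
    rewrite age_succ /a.
    by case: (s k == i); case: (sigma i k); rewrite /= ?addr0 // -natr1 addrC.
  rewrite (eq_bigr _ (fun s _ => age_succ_split s)) big_split /= sumr_const -mulr_natl mulr1.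
  case: (sigma i k); last by rewrite mul1r; under eq_bigr do rewrite orbT.
  under eq_bigr do rewrite orbF.
  by rewrite -big_mkcond /= (sum_ffun_coord_neq _ a_indep_k) card_ord.
by rewrite /exp_age age_succ_sum mulrDl divff ?lt0r_neq0 ?(card_schedule_gt0 i) // mulrA.
Qed.

Lemma sum_blocked_exp_age_le (k : 'I_T) t :
  (#|[set i | ~~ sigma i k]| <= 1)%N -> \sum_(i | ~~ sigma i k) E i t <= t.+1%:R.
Proof.
move=> one_blocked.
apply: le_trans (ler_sum _ (fun i _ => exp_age_le i t)) _.
rewrite sumr_const; move: one_blocked; rewrite cardsE.
by case: #|_| => [|[|]] //= _; rewrite ?mulr0n ?mulr1n ?ler0n.
Qed.

Lemma sum_exp_age_le t :
  (0 < N)%N -> (forall k : 'I_T, (#|[set i | ~~ sigma i k]| <= 1)%N) ->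
  (t <= T)%N -> \sum_(i < N) E i t <= t.+1%:R + N%:R * (N%:R - 1).
Proof.
move=> N_gt0 one_blocked; elim: t => [_|t IH tT].
  under eq_bigr do rewrite exp_age0.
  rewrite sumr_const card_ord.
  by have := sqr_ge0 (N%:R - 1 : R); nra.
pose k := Ordinal tT.
set u : R := N%:R^-1.
have uN : u * N%:R = 1 by rewrite mulVf // pnatr_eq0 -lt0n.
have u_ge0 : 0 <= u by rewrite invr_ge0 ler0n.
have one_sub_u_ge0 : 0 <= 1 - u by rewrite subr_ge0 invf_le1 ?ler1n ?ltr0n.
have exp_age_succ_split i : 1 + (if sigma i k then 1 - u else 1) * E i k
    = 1 + (1 - u) * E i k + (if ~~ sigma i k then u * E i k else 0).
  by case: (sigma i k); rewrite /= ?addr0 //; ring.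
rewrite (eq_bigr _ (fun i _ => exp_age_succ i k)).
rewrite (eq_bigr _ (fun i _ => exp_age_succ_split i)) !big_split /= sumr_const card_ord.
rewrite -mulr_sumr -big_mkcond -mulr_sumr /=.
have scaled_sum_le := ler_wpM2l one_sub_u_ge0 (IH (ltnW tT)).
have scaled_blocked_le := ler_wpM2l u_ge0 (sum_blocked_exp_age_le t (one_blocked k)).
have uNN : u * (N%:R * (N%:R - 1)) = N%:R - 1 by rewrite mulrA uN mul1r.
rewrite -natr1 -[1 *+ N]/(N%:R); lra.
Qed.

End ExpectedAge.

Lemma triangular_sumr (R : comPzRingType) (T : nat) :
  2 * \sum_(t < T) (t.+1%:R : R) = T%:R * (T%:R + 1).
Proof.
elim: T => [|T IH]; first by rewrite big_ord0 mulr0 mul0r.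
by rewrite big_ord_recr /= mulrDr IH -natr1; ring.
Qed.

Lemma mean_slot_bound (R : realFieldType) (N T : nat) :
  (0 < N)%N -> (0 < T)%N ->
  T%:R^-1 * \sum_(t < T) (N%:R^-1 * (t.+1%:R + N%:R * (N%:R - 1)))
  = (T%:R + 1) / (2 * N%:R) + (N%:R - 1) :> R.
Proof.
move=> N_gt0 T_gt0.
have N_neq0 : N%:R != 0 :> R by rewrite pnatr_eq0 -lt0n.
have T_neq0 : T%:R != 0 :> R by rewrite pnatr_eq0 -lt0n.
rewrite -mulr_sumr big_split /= sumr_const card_ord -mulr_natr.
have sum_succ := triangular_sumr R T.
set S := \sum_(t < T) _ in sum_succ *.
have -> : S = T%:R * (T%:R + 1) / 2 by rewrite -sum_succ; field.
by field; rewrite N_neq0 T_neq0.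
Qed.

Theorem theorem2 (R : realFieldType) (N T : nat) (alpha : R)
    (hN : (2 <= N)%N) (hT : (0 < T)%N)
    (ha0 : 0 < alpha) (ha1 : alpha < 1)
    (haT : exists k : nat, alpha * T%:R = k%:R)
    (sigma : 'I_N -> 'I_T -> bool) :
  feasible alpha sigma ->
  avg_age R sigma <= (T%:R + 1) / (2 * N%:R) + (N%:R - 1).
Proof.
move=> [_ one_blocked].
have N_gt0 : (0 < N)%N by apply: ltnW.
rewrite /avg_age -mean_slot_bound // ler_wpM2l ?invr_ge0 ?ler0n // ler_sum // => t _.
by rewrite ler_wpM2l ?invr_ge0 ?ler0n // sum_exp_age_le // ltnW.
Qed.
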